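(* Let $N_1,N_2,N_3\ge0$ be integers and $\Phi\in P(N_1,N_2,N_3)$. Suppose the kernel of $A(N_1,N_2,N_3)$ has dimension $\nu_A=1$. Then every $f\in D_A$ is an extremal polynomial in the class $Q(N_1,N_2,N_3)$.
   Context: For integers $N_1,N_2,N_3\ge0$, $\sigma(N_1,N_2,N_3)$ is the set of trigonometric polynomials $f(\alpha,\beta,\gamma)=\sum_{|k|\le N_1}\sum_{|\ell|\le N_2}\sum_{|m|\le N_3} q(k,\ell,m)e^{i(k\alpha+\ell\beta+m\gamma)}$ with $f\ge0$ for all real $\alpha,\beta,\gamma$; $Q(N_1,N_2,N_3)$ is the set of $f\in\sigma(N_1,N_2,N_3)$ of the form $f=\sum_{j=1}^r|F_j|^2$ with $F_j=\sum_{0\le k\le N_1,0\le\ell\le N_2,0\le m\le N_3}q_j(k,\ell,m)e^{i(k\alpha+\ell\beta+m\gamma)}$. Let $S=\{(k,\ell,m)\in\mathbb Z^3:0\le k\le N_1,0\le\ell\le N_2,0\le m\le N_3\}$, $\Delta=S-S$. $P(N_1,N_2,N_3)$ is the class of $\Phi:\Delta\to\mathbb C$ with $\sum_{i,j}\xi_i\bar\xi_j\Phi(x_i-x_j)\ge0$ for all $x_i\in S$, $\xi_i\in\mathbb C$. $A(N_1,N_2,N_3)$ is the matrix indexed by $S\times S$ with entry $\Phi(y-x)$ in row $x$, column $y$; $\nu_A$ is the dimension of its (complex) kernel. For a vector $e=(e(x))_{x\in S}$ put $F_e(\alpha,\beta,\gamma)=\sum_{(k,\ell,m)\in S}e(k,\ell,m)e^{i(k\alpha+\ell\beta+m\gamma)}$.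 $D_A$ is the convex hull of the polynomials $|F_e|^2$ with $e\ne0$ in the kernel of $A(N_1,N_2,N_3)$. An element $f$ of a convex cone $U$ is called extremal in $U$ if whenever $f=g+h$ with $g,h\in U$, both $g$ and $h$ are nonnegative multiples of $f$. *)

From HB Require Import structures.
From mathcomp Require Import all_boot all_order all_algebra.
From mathcomp Require Import complex.
From mathcomp Require Import all_classical all_reals all_analysis.
Set Implicit Arguments. Unset Strict Implicit. Unset Printing Implicit Defensive.
Import Order.TTheory GRing.Theory Num.Theory.
Local Open Scope ring_scope.
Local Open Scope complex_scope.

Section Defs.
Variable R : realType.
Local Notation C := R[i].

Definition expi (t : R) : C := (cos t +i* sin t)%C.

Definition chi (k l m : int) (a b c : R) : C :=
  expi (k%:~R * a + l%:~R * b + m%:~R * c).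

(* trigonometric polynomials in 3 variables are represented by their values *)
Definition trigfun := R -> R -> R -> C.

Definition sigmaN (N1 N2 N3 : nat) (f : trigfun) : Prop :=
  (exists q : int -> int -> int -> C,
     forall a b c : R,
       f a b c = \sum_(k < (N1.*2).+1) \sum_(l < (N2.*2).+1) \sum_(m < (N3.*2).+1)
                   q (k%:Z - N1%:Z)%R (l%:Z - N2%:Z)%R (m%:Z - N3%:Z)%R
                   * chi (k%:Z - N1%:Z)%R (l%:Z - N2%:Z)%R (m%:Z - N3%:Z)%R a b c)
  /\ (forall a b c : R, 0 <= f a b c).

Definition Sidx (N1 N2 N3 : nat) : finType := ('I_N1.+1 * 'I_N2.+1 * 'I_N3.+1)%type.

Definition sk N1 N2 N3 (x : Sidx N1 N2 N3) : int := (nat_of_ord x.1.1)%:Z.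
Definition sl N1 N2 N3 (x : Sidx N1 N2 N3) : int := (nat_of_ord x.1.2)%:Z.
Definition sm N1 N2 N3 (x : Sidx N1 N2 N3) : int := (nat_of_ord x.2)%:Z.

Definition Fpoly N1 N2 N3 (q : Sidx N1 N2 N3 -> C) : trigfun :=
  fun a b c => \sum_(x : Sidx N1 N2 N3) q x * chi (sk x) (sl x) (sm x) a b c.

Definition QN (N1 N2 N3 : nat) (f : trigfun) : Prop :=
  sigmaN N1 N2 N3 f /\
  exists (r : nat) (q : 'I_r -> Sidx N1 N2 N3 -> C),
    forall a b c : R, f a b c = \sum_(j < r) `|Fpoly (q j) a b c| ^+ 2.

(* Phi : Delta -> C is represented as a function on Z^3 (only values on
   Delta = S - S matter). *)
Definition diffk N1 N2 N3 (x y : Sidx N1 N2 N3) : int * int * int :=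
  ((sk x - sk y)%R, (sl x - sl y)%R, (sm x - sm y)%R).

Definition PN (N1 N2 N3 : nat) (Phi : int * int * int -> C) : Prop :=
  forall (n : nat) (x : 'I_n -> Sidx N1 N2 N3) (xi : 'I_n -> C),
    0 <= \sum_(i < n) \sum_(j < n) xi i * (xi j)^* * Phi (diffk (x i) (x j)).

Definition Amx N1 N2 N3 (Phi : int * int * int -> C) : 'M[C]_#|Sidx N1 N2 N3| :=
  \matrix_(i, j) Phi (diffk (enum_val j) (enum_val i)).

Definition in_kerA N1 N2 N3 (Phi : int * int * int -> C) (e : 'cV[C]_#|Sidx N1 N2 N3|) : Prop :=
  Amx N1 N2 N3 Phi *m e = 0.

(* nu_A = dimension of the kernel {e | A e = 0}; kermx M is the row kernel
   {u | u M = 0}, so the column kernel of A is (transposed) kermx A^T *)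
Definition nuA N1 N2 N3 (Phi : int * int * int -> C) : nat :=
  \rank (kermx (Amx N1 N2 N3 Phi)^T).

Definition Fe N1 N2 N3 (e : 'cV[C]_#|Sidx N1 N2 N3|) : trigfun :=
  Fpoly (fun x => e (enum_rank x) 0).

Definition DA N1 N2 N3 (Phi : int * int * int -> C) (f : trigfun) : Prop :=
  exists (n : nat) (lam : 'I_n -> R) (e : 'I_n -> 'cV[C]_#|Sidx N1 N2 N3|),
    (forall i, 0 <= lam i) /\ \sum_(i < n) lam i = 1 /\
    (forall i, e i != 0 /\ in_kerA Phi (e i)) /\
    forall a b c : R, f a b c = \sum_(i < n) (lam i)%:C * `|Fe (e i) a b c| ^+ 2.

Definition extremal (U : trigfun -> Prop) (f : trigfun) : Prop :=
  U f /\
  forall g h : trigfun, U g -> U h ->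
    (forall a b c, f a b c = g a b c + h a b c) ->
    (exists s : R, 0 <= s /\ forall a b c, g a b c = s%:C * f a b c) /\
    (exists t : R, 0 <= t /\ forall a b c, h a b c = t%:C * f a b c).

End Defs.

(* Since the kernel of A is a line, every f in D_A equals |F_w|^2 for a single
   kernel vector w.  Pairing a trigonometric polynomial
   sum_{x,y} M(x,y) e^{i<x-y,.>} with Phi, i.e. forming sum_{x,y} M(x,y) Phi(x-y),
   is well defined because the characters are linearly independent, and it maps
   |F_u|^2 to the Hermitian form <A u, u>, which is nonnegative since Phi is
   positive definite and vanishes only on the kernel of A.  If
   |F_w|^2 = sum_j |F_{G_j}|^2 + sum_k |F_{H_k}|^2, pairing with Phi gives
   0 = sum_j <A G_j, G_j> + sum_k <A H_k, H_k>, so every G_j lies in the kernel,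
   is a multiple of w, and sum_j |F_{G_j}|^2 is a nonnegative multiple of |F_w|^2. *)

From HB Require Import structures.
From mathcomp Require Import all_boot all_order all_algebra.
From mathcomp Require Import ring lra zify.
From mathcomp Require Import complex.
From mathcomp Require Import all_classical all_reals all_analysis.
Set Implicit Arguments. Unset Strict Implicit. Unset Printing Implicit Defensive.
Import Order.TTheory GRing.Theory Num.Theory.
Local Open Scope ring_scope.
Local Open Scope complex_scope.

Local Notation Z3 := (int * int * int)%type.

Section Characters.
Variable R : realType.
Local Notation C := R[i].

Lemma expiD (x y : R) : expi (x + y) = expi x * expi y.
Proof. by rewrite /expi cosD sinD; simpc; congr (_ +i* _); ring. Qed.

Lemma expi0 : expi 0 = 1 :> C.
Proof. by rewrite /expi cos0 sin0. Qed.

Lemma expi_pi : expi pi = -1 :> C.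
Proof. by rewrite /expi cospi sinpi; simpc. Qed.

Lemma conj_expi (x : R) : Num.conj (expi x) = expi (- x).
Proof. by rewrite /expi cosN sinN. Qed.

Lemma expi_neq0 (x : R) : expi x != 0 :> C.
Proof.
apply/eqP => ex0; have := expiD x (- x).
by rewrite subrr expi0 ex0 mul0r => /eqP; rewrite oner_eq0.
Qed.

Lemma expi_int_sep (k k' : int) : k != k' ->
  exists x : R, expi (k%:~R * x) != expi (k'%:~R * x) :> C.
Proof.
move=> neq_kk'; pose x : R := pi / (k - k')%:~R; exists x.
have kk'0 : (k - k')%:~R != 0 :> R by rewrite intr_eq0 subr_eq0.
have -> : k%:~R * x = k'%:~R * x + pi.
  by rewrite -[pi in RHS](divfK kk'0) -/x intrB; ring.
by rewrite expiD expi_pi mulrN1 eqNr expi_neq0.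
Qed.

Definition chi3 (a b c : R) (t : Z3) : C := chi t.1.1 t.1.2 t.2 a b c.

Lemma chi3D (a b c a' b' c' : R) t :
  chi3 (a + a') (b + b') (c + c') t = chi3 a b c t * chi3 a' b' c' t.
Proof. by rewrite /chi3 /chi -expiD; congr expi; ring. Qed.

Lemma chi3_0 t : chi3 0 0 0 t = 1.
Proof. by rewrite /chi3 /chi !mulr0 !addr0 expi0. Qed.

Lemma chi_mulJ k l m k' l' m' (a b c : R) :
  chi k l m a b c * Num.conj (chi k' l' m' a b c) =
  chi (k - k') (l - l') (m - m') a b c.
Proof. by rewrite /chi conj_expi -expiD; congr expi; rewrite !intrB; ring. Qed.

Lemma chi3_sep t t' : t != t' -> exists a b c, chi3 a b c t != chi3 a b c t'.
Proof.
case: t t' => [[k l] m] [[k' l'] m']; rewrite /chi3 /chi /=.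
have [<-|/expi_int_sep[x sep] _] := eqVneq k k'; last first.
  by exists x, 0, 0; rewrite !mulr0 !addr0.
have [<-|/expi_int_sep[x sep] _] := eqVneq l l'; last first.
  by exists 0, x, 0; rewrite !mulr0 !add0r !addr0.
have [<-|/expi_int_sep[x sep] _] := eqVneq m m'; last first.
  by exists 0, 0, x; rewrite !mulr0 !add0r.
by rewrite eqxx.
Qed.

Lemma chi3_free (s : seq Z3) (cf : Z3 -> C) : uniq s ->
  (forall a b c, \sum_(t <- s) cf t * chi3 a b c t = 0) ->
  forall t, t \in s -> cf t = 0.
Proof.
elim: s cf => [|t0 s IH] cf //= /andP[t0_notin_s uniq_s] sum0.
have cf_s t : t \in s -> cf t = 0.
  move=> t_in_s.
  have /chi3_sep[a' [b' [c' sep]]] : t != t0 by apply: contraNneq t0_notin_s => <-.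
  pose cf' u := cf u * (chi3 a' b' c' u - chi3 a' b' c' t0).
  suff /eqP : cf' t = 0 by rewrite mulf_eq0 subr_eq0 (negPf sep) orbF => /eqP.
  apply: IH t_in_s => // a b c.
  (* shifting the point by (a', b', c') and subtracting cancels the t0 term *)
  have := sum0 (a + a') (b + b') (c + c'); have := sum0 a b c.
  rewrite !big_cons => sum_ab sum_shift.
  have t0_cancels : cf t0 * chi3 (a + a') (b + b') (c + c') t0
      - chi3 a' b' c' t0 * (cf t0 * chi3 a b c t0) = 0 by rewrite chi3D; ring.
  transitivity ((cf t0 * chi3 (a + a') (b + b') (c + c') t0
      + \sum_(u <- s) cf u * chi3 (a + a') (b + b') (c + c') u)
      - chi3 a' b' c' t0 * (cf t0 * chi3 a b c t0 + \sum_(u <- s) cf u * chi3 a b c u));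
    last by rewrite sum_shift sum_ab mulr0 subr0.
  rewrite mulrDr opprD addrACA t0_cancels add0r mulr_sumr -sumrB.
  by apply: eq_bigr => u _; rewrite /cf' chi3D; ring.
move=> t; rewrite inE => /predU1P[->|/cf_s //].
have := sum0 0 0 0; rewrite big_cons chi3_0 mulr1 big_seq big1 ?addr0 //.
by move=> u /cf_s ->; rewrite mul0r.
Qed.

Lemma sum_partition_image (I : finType) (T : eqType) (cf : I -> C) (d : I -> T) (G : T -> C) :
  \sum_i cf i * G (d i) =
  \sum_(t <- undup (map d (enum I))) (\sum_(i | d i == t) cf i) * G t.
Proof.
under [RHS]eq_bigr => t _ do rewrite mulr_suml big_mkcond.
rewrite exchange_big /=; apply: eq_bigr => i _.
have di_in : d i \in undup (map d (enum I)) by rewrite mem_undup map_f ?mem_enum.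
rewrite (big_rem _ di_in) eqxx big1_seq; first by rewrite /= addr0.
move=> t /andP[_ t_in].
by case: eqP => // dit; move: t_in; rewrite -dit mem_rem_uniqF ?undup_uniq.
Qed.

Lemma chi3_sum_transfer (I : finType) (cf : I -> C) (d : I -> Z3) :
  (forall a b c, \sum_i cf i * chi3 a b c (d i) = 0) ->
  forall psi : Z3 -> C, \sum_i cf i * psi (d i) = 0.
Proof.
move=> sum0 psi; rewrite sum_partition_image big_seq big1 // => t t_in.
rewrite (@chi3_free _ (fun t => \sum_(i | d i == t) cf i) (undup_uniq _) _ t t_in) ?mul0r //.
by move=> a b c; rewrite -sum_partition_image.
Qed.

End Characters.

Lemma sum_centered_indicator (V : pzSemiRingType) (N : nat) (a : int) :
  (- N%:Z <= a <= N%:Z)%R -> \sum_(k < N.*2.+1) (a == k%:Z - N%:Z)%:R = 1 :> V.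
Proof.
move=> /andP[geN leN]; have ltk : (absz (a + N%:Z)%R < N.*2.+1)%N by lia.
rewrite (bigD1 (Ordinal ltk)) //= (_ : a == _) //; last by apply/eqP; lia.
rewrite big1 ?addr0 // => k neq_k; case: eqP => // ak.
by move: neq_k; rewrite (_ : k = Ordinal ltk) ?eqxx //; apply/val_inj => /=; lia.
Qed.

Section Gram.
Variables (R : realType) (N1 N2 N3 : nat).
Local Notation C := R[i].
Local Notation S := (Sidx N1 N2 N3).

Definition pair_eval (psi : Z3 -> C) (M : S -> S -> C) : C :=
  \sum_x \sum_y M x y * psi (diffk x y).

Definition gram (u v : S -> C) (x y : S) : C := u x * Num.conj (v y).

Lemma normF2_pair_eval (u : S -> C) a b c :
  `|Fpoly u a b c| ^+ 2 = pair_eval (chi3 a b c) (gram u u).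
Proof.
rewrite normCK /Fpoly rmorph_sum mulr_suml; apply: eq_bigr => x _.
rewrite mulr_sumr; apply: eq_bigr => y _.
by rewrite rmorphM /gram /chi3 /diffk /= -chi_mulJ; ring.
Qed.

Lemma pair_evalD psi (M M' : S -> S -> C) :
  pair_eval psi (fun x y => M x y + M' x y) = pair_eval psi M + pair_eval psi M'.
Proof.
rewrite /pair_eval -big_split; apply: eq_bigr => x _.
by rewrite -big_split; apply: eq_bigr => y _; rewrite mulrDl.
Qed.

Lemma pair_eval_sum psi (I : finType) (M : I -> S -> S -> C) :
  pair_eval psi (fun x y => \sum_i M i x y) = \sum_i pair_eval psi (M i).
Proof.
rewrite /pair_eval.
under eq_bigr => x _ do under eq_bigr => y _ do rewrite mulr_suml.
by under eq_bigr => x _ do rewrite exchange_big; rewrite exchange_big.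
Qed.

Lemma pair_eval_transfer (M M' : S -> S -> C) :
  (forall a b c, pair_eval (chi3 a b c) M = pair_eval (chi3 a b c) M') ->
  forall psi, pair_eval psi M = pair_eval psi M'.
Proof.
have diffE psi : pair_eval psi M - pair_eval psi M' =
    \sum_(p : S * S) (M p.1 p.2 - M' p.1 p.2) * psi (diffk p.1 p.2).
  rewrite -(pair_bigA _ (fun x y => (M x y - M' x y) * psi (diffk x y))) -sumrB;
  apply: eq_bigr => x _.
  by rewrite -sumrB; apply: eq_bigr => y _; rewrite mulrBl.
move=> eqM psi; apply/eqP; rewrite -subr_eq0 diffE; apply/eqP.
by apply: chi3_sum_transfer => a b c; rewrite -diffE eqM subrr.
Qed.

Lemma diffk_bounds (x y : S) :
  [/\ (- N1%:Z <= (diffk x y).1.1 <= N1%:Z)%R,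
      (- N2%:Z <= (diffk x y).1.2 <= N2%:Z)%R &
      (- N3%:Z <= (diffk x y).2 <= N3%:Z)%R].
Proof.
case: x y => [[i j] k] [[i' j'] k']; rewrite /diffk /sk /sl /sm /=.
have := ltn_ord i; have := ltn_ord j; have := ltn_ord k.
have := ltn_ord i'; have := ltn_ord j'; have := ltn_ord k'.
by move=> *; split; apply/andP; split; lia.
Qed.

Lemma sum_box_indicator (t : Z3) (F : int -> int -> int -> C) :
  (- N1%:Z <= t.1.1 <= N1%:Z)%R -> (- N2%:Z <= t.1.2 <= N2%:Z)%R ->
  (- N3%:Z <= t.2 <= N3%:Z)%R ->
  \sum_(k < N1.*2.+1) \sum_(l < N2.*2.+1) \sum_(m < N3.*2.+1)
    (t == (k%:Z - N1%:Z, l%:Z - N2%:Z, m%:Z - N3%:Z))%:R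
      * F (k%:Z - N1%:Z) (l%:Z - N2%:Z) (m%:Z - N3%:Z)
  = F t.1.1 t.1.2 t.2.
Proof.
case: t => [[t1 t2] t3] /= b1 b2 b3.
have split_indicator (k l m : int) : ((t1, t2, t3) == (k, l, m))%:R * F k l m =
    (t1 == k)%:R * ((t2 == l)%:R * ((t3 == m)%:R * F t1 t2 t3)).
  by rewrite !xpair_eqE; do 3 case: eqP => [<-|_]; rewrite /= ?mul0r ?mulr0 ?mul1r.
under eq_bigr => k _ do under eq_bigr => l _ do
  under eq_bigr => m _ do rewrite split_indicator.
under eq_bigr => k _ do under eq_bigr => l _ do
  rewrite -!mulr_sumr -mulr_suml sum_centered_indicator // mul1r.
under eq_bigr => k _ do rewrite -mulr_sumr -mulr_suml sum_centered_indicator // mul1r.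
by rewrite -mulr_suml sum_centered_indicator // mul1r.
Qed.

Lemma sigmaN_pair_eval (M : S -> S -> C) :
  (forall a b c, 0 <= pair_eval (chi3 a b c) M) ->
  sigmaN N1 N2 N3 (fun a b c => pair_eval (chi3 a b c) M).
Proof.
split=> //.
exists (fun k l m => \sum_(p : S * S) (diffk p.1 p.2 == (k, l, m))%:R * M p.1 p.2).
move=> a b c; rewrite /pair_eval pair_bigA /=.
under [RHS]eq_bigr => k _ do under eq_bigr => l _ do
  under eq_bigr => m _ do rewrite mulr_suml.
under [RHS]eq_bigr => k _ do under eq_bigr => l _ do rewrite exchange_big.
under [RHS]eq_bigr => k _ do rewrite exchange_big.
rewrite [RHS]exchange_big; apply: eq_bigr => -[x y] _ /=.
have [b1 b2 b3] := diffk_bounds x y.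
rewrite -(sum_box_indicator (fun k l m => M x y * chi k l m a b c) b1 b2 b3).
by do 3 (apply: eq_bigr => ? _); rewrite mulrA.
Qed.

Lemma QN_normF2 (u : S -> C) : QN N1 N2 N3 (fun a b c => `|Fpoly u a b c| ^+ 2).
Proof.
split; last by exists 1%N, (fun _ => u) => a b c; rewrite big_ord1.
have -> : (fun a b c => `|Fpoly u a b c| ^+ 2) =
    (fun a b c => pair_eval (chi3 a b c) (gram u u)).
  by do 3 apply: funext => ?; rewrite normF2_pair_eval.
by apply: sigmaN_pair_eval => a b c; rewrite -normF2_pair_eval exprn_ge0.
Qed.

Definition coords (e : 'cV[C]_#|S|) (x : S) : C := e (enum_rank x) 0.

Definition colvec (u : S -> C) : 'cV[C]_#|S| := \col_i u (enum_val i).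

Lemma Fe_colvec (u : S -> C) a b c : Fe (colvec u) a b c = Fpoly u a b c.
Proof. by rewrite /Fe /Fpoly; apply: eq_bigr => x _; rewrite mxE enum_rankK. Qed.

Lemma normFeZ (k : C) (e : 'cV[C]_#|S|) a b c :
  `|Fe (k *: e) a b c| ^+ 2 = `|k| ^+ 2 * `|Fe e a b c| ^+ 2.
Proof.
rewrite -exprMn -normrM /Fe /Fpoly mulr_sumr.
by congr (`|_| ^+ 2); apply: eq_bigr => x _; rewrite mxE mulrA.
Qed.

End Gram.

Lemma colker_rank1_line (F : fieldType) (m n : nat) (A : 'M[F]_(m, n)) (w e : 'cV[F]_n) :
  \rank (kermx A^T) = 1%N -> w != 0 -> A *m w = 0 -> A *m e = 0 ->
  exists k, e = k *: w.
Proof.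
move=> rank1 w_neq0 Aw Ae.
have in_ker (v : 'cV[F]_n) : A *m v = 0 -> (v^T <= kermx A^T)%MS.
  by move=> Av; apply/sub_kermxP; rewrite -trmx_mul Av trmx0.
have rank_w : \rank w^T = 1%N.
  by apply/eqP; rewrite eqn_leq rank_leq_row lt0n mxrank_eq0 trmx_eq0 w_neq0.
have /andP[_ ker_le_w] : (w^T == kermx A^T)%MS.
  by rewrite -(mxrank_leqif_eq (in_ker _ Aw)).2 rank_w rank1.
have /sub_rVP[k ek] := submx_trans (in_ker _ Ae) ker_le_w.
by exists k; apply: (can_inj trmxK); rewrite ek linearZ.
Qed.

Lemma lin_quad_ge0_eq0 (F : realFieldType) (al be : F) :
  0 <= be -> (forall r, 0 <= r * al + r * r * be) -> al = 0.
Proof.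
move=> be_ge0 quad_ge0.
have be1_neq0 : be + 1 != 0 by rewrite gt_eqF //; lra.
pose r := - al / (be + 1).
have alE : al = - (r * (be + 1)) by rewrite /r divfK // opprK.
have r2_le0 : r * r <= 0.
  by have := quad_ge0 r; rewrite alE (_ : _ + _ = - (r * r)) ?oppr_ge0 //; ring.
have /eqP : r * r = 0 by apply/le_anti; rewrite r2_le0 /=; nra.
by rewrite mulf_eq0 orbb alE => /eqP->; rewrite mul0r oppr0.
Qed.

Lemma cquad_ge0_cross_eq0 (R : rcfType) (z1 z2 be : R[i]) : 0 <= be ->
  (forall t, 0 <= Num.conj t * z1 + t * z2 + t * Num.conj t * be) -> z1 = 0.
Proof.
case: z1 z2 be => [a1 b1] [a2 b2] [be ibe]; rewrite lecE /= => /andP[/eqP-> be_ge0] quad_ge0.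
have quad_re r : (r * b1 + r * b2 == 0) && (0 <= r * a1 + r * a2 + r * r * be).
  by have := quad_ge0 r%:C; rewrite lecE /=; simpc.
have quad_im r : (- (r * a1) + r * a2 == 0) && (0 <= r * b1 - r * b2 + r * r * be).
  by have := quad_ge0 (r%:C * 'i); rewrite lecE /=; simpc.
have a12 : a1 + a2 = 0.
  by apply: (lin_quad_ge0_eq0 be_ge0) => r; have /andP[_] := quad_re r; lra.
have b12 : b1 - b2 = 0.
  by apply: (lin_quad_ge0_eq0 be_ge0) => r; have /andP[_] := quad_im r; lra.
have /andP[/eqP b21 _] := quad_re 1; have /andP[/eqP a21 _] := quad_im 1.
by congr (_ +i* _); lra.
Qed.

Section PhiForm.
Variables (R : realType) (N1 N2 N3 : nat) (Phi : Z3 -> R[i]).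
Local Notation C := R[i].
Local Notation S := (Sidx N1 N2 N3).

Definition phiform (u v : S -> C) : C := pair_eval Phi (gram u v).

Definition Amul (u : S -> C) (y : S) : C := \sum_x u x * Phi (diffk x y).

Lemma in_kerAP (e : 'cV[C]_#|S|) : in_kerA Phi e <-> forall y, Amul (coords e) y = 0.
Proof.
have AeE i : (Amx N1 N2 N3 Phi *m e) i 0 = Amul (coords e) (enum_val i).
  rewrite !mxE /Amul [RHS](big_enum_val (A := predT)) /=.
  by apply: eq_bigr => j _; rewrite !mxE /coords enum_valK mulrC.
split=> [Ae0 y | Amul0]; first by rewrite -(enum_rankK y) -AeE Ae0 mxE.
by apply/matrixP => i j; rewrite ord1 AeE Amul0 mxE.
Qed.

Lemma phiformE (u v : S -> C) : phiform u v = \sum_y Num.conj (v y) * Amul u y.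
Proof.
rewrite /phiform /pair_eval exchange_big; apply: eq_bigr => y _.
by rewrite /Amul mulr_sumr; apply: eq_bigr => x _; rewrite /gram; ring.
Qed.

Lemma phiform_ge0 : PN N1 N2 N3 Phi -> forall u, 0 <= phiform u u.
Proof.
move=> PN_Phi u; rewrite /phiform /pair_eval (big_enum_val (A := predT)) /=.
under eq_bigr => i _ do rewrite (big_enum_val (A := predT)) /=.
exact: PN_Phi.
Qed.

Lemma phiform_expand (u v : S -> C) t :
  phiform (fun x => u x + t * v x) (fun x => u x + t * v x) =
  phiform u u + Num.conj t * phiform u v + t * phiform v u
  + t * Num.conj t * phiform v v.
Proof.
rewrite /phiform /pair_eval.
transitivity (\sum_x \sum_y (u x * Num.conj (u y) * Phi (diffk x y)
   + Num.conj t * (u x * Num.conj (v y) * Phi (diffk x y))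
   + t * (v x * Num.conj (u y) * Phi (diffk x y))
   + t * Num.conj t * (v x * Num.conj (v y) * Phi (diffk x y)))).
  by do 2 (apply: eq_bigr => ? _); rewrite /gram rmorphD rmorphM; ring.
under eq_bigr => x _ do rewrite !big_split /= -!mulr_sumr.
by rewrite !big_split /= -!mulr_sumr.
Qed.

Lemma phiform_eq0_ker (u : S -> C) :
  PN N1 N2 N3 Phi -> phiform u u = 0 -> in_kerA Phi (colvec u).
Proof.
move=> PN_Phi uu0.
(* [t |-> phiform (u + t v) (u + t v)] is a nonnegative quadratic form vanishing at 0 *)
have uv0 v : phiform u v = 0.
  apply: (@cquad_ge0_cross_eq0 _ _ (phiform v u) (phiform v v)) => [|t].
    exact: phiform_ge0.
  by have := phiform_ge0 PN_Phi (fun x => u x + t * v x); rewrite phiform_expand uu0 add0r.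
apply/in_kerAP => y; have := uv0 (fun x => (x == y)%:R).
rewrite phiformE (bigD1 y) //= eqxx rmorph1 mul1r big1 ?addr0 => [Amul0|z /negbTE->].
  by rewrite -Amul0; apply: eq_bigr => x _; rewrite /coords mxE enum_rankK.
by rewrite rmorph0 mul0r.
Qed.

Lemma ker_phiform_eq0 (e : 'cV[C]_#|S|) :
  in_kerA Phi e -> phiform (coords e) (coords e) = 0.
Proof. by move/in_kerAP => Amul0; rewrite phiformE big1 // => y _; rewrite Amul0 mulr0. Qed.

End PhiForm.

Section Extremality.
Variables (R : realType) (N1 N2 N3 : nat) (Phi : Z3 -> R[i]).
Hypotheses (PN_Phi : PN N1 N2 N3 Phi) (nuA1 : nuA N1 N2 N3 Phi = 1%N).
Local Notation C := R[i].
Local Notation S := (Sidx N1 N2 N3).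

Lemma sos_split_phiform0 (w : 'cV[C]_#|S|) (rg rh : nat)
    (G : 'I_rg -> S -> C) (H : 'I_rh -> S -> C) :
  in_kerA Phi w ->
  (forall a b c, `|Fe w a b c| ^+ 2 =
     \sum_j `|Fpoly (G j) a b c| ^+ 2 + \sum_j `|Fpoly (H j) a b c| ^+ 2) ->
  forall j, phiform Phi (G j) (G j) = 0.
Proof.
move=> ker_w sos_eq.
pose MG x y := \sum_j gram (G j) (G j) x y; pose MH x y := \sum_j gram (H j) (H j) x y.
have chi_eq a b c : pair_eval (chi3 a b c) (gram (coords w) (coords w)) =
    pair_eval (chi3 a b c) (fun x y => MG x y + MH x y).
  rewrite pair_evalD !pair_eval_sum -normF2_pair_eval sos_eq.
  by congr (_ + _); apply: eq_bigr => j _; rewrite normF2_pair_eval.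
move: (pair_eval_transfer chi_eq Phi) => /(etrans (esym (ker_phiform_eq0 ker_w))).
rewrite pair_evalD !pair_eval_sum => /esym/eqP.
have sum_ge0 r (K : 'I_r -> S -> C) : 0 <= \sum_j pair_eval Phi (gram (K j) (K j)).
  by apply: sumr_ge0 => j _; apply: phiform_ge0.
rewrite paddr_eq0 ?sum_ge0 // => /andP[/eqP sumG0 _] j.
exact: (psumr_eq0P (fun j _ => phiform_ge0 PN_Phi (G j)) sumG0).
Qed.

Lemma QN_split_normF2 (w : 'cV[C]_#|S|) (g h : trigfun R) :
  in_kerA Phi w -> QN N1 N2 N3 g -> QN N1 N2 N3 h ->
  (forall a b c, `|Fe w a b c| ^+ 2 = g a b c + h a b c) ->
  exists s : R, 0 <= s /\ forall a b c, g a b c = s%:C * `|Fe w a b c| ^+ 2.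
Proof.
move=> ker_w [[_ g_ge0] [rg [G g_eq]]] [[_ h_ge0] [rh [H h_eq]]] split_fw.
have [w0 | w_neq0] := eqVneq w 0.
  exists 0; split=> // a b c; rewrite mul0r.
  have : g a b c + h a b c == 0.
    by rewrite -split_fw (_ : w = 0 *: w) ?normFeZ ?normr0 ?expr0n ?mul0r // w0 scale0r.
  by rewrite paddr_eq0 // => /andP[/eqP].
have G_line j : exists k, colvec (G j) = k *: w.
  apply: (colker_rank1_line nuA1 w_neq0 ker_w).
  apply: (phiform_eq0_ker PN_Phi); apply: (sos_split_phiform0 ker_w) => a b c.
  by rewrite split_fw g_eq h_eq.
have [k Gk] := choice G_line.
have sum_ge0 : 0 <= \sum_j `|k j| ^+ 2 :> C by apply: sumr_ge0 => j _; apply: exprn_ge0.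
exists (complex.Re (\sum_j `|k j| ^+ 2)); split.
  by rewrite -ler0c RRe_real // ger0_real.
move=> a b c; rewrite RRe_real ?ger0_real // g_eq mulr_suml.
by apply: eq_bigr => j _; rewrite -Fe_colvec Gk normFeZ.
Qed.

Lemma extremal_normF2 (w : 'cV[C]_#|S|) :
  in_kerA Phi w -> extremal (@QN R N1 N2 N3) (fun a b c => `|Fe w a b c| ^+ 2).
Proof.
move=> ker_w; split; first exact: QN_normF2.
move=> g h QN_g QN_h split_fw; split; first exact: QN_split_normF2 QN_g QN_h split_fw.
by apply: QN_split_normF2 ker_w QN_h QN_g _ => a b c; rewrite addrC.
Qed.

Lemma DA_normF2 (f : trigfun R) : DA N1 N2 N3 Phi f ->
  exists w : 'cV[C]_#|S|, in_kerA Phi w /\ f = (fun a b c => `|Fe w a b c| ^+ 2).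
Proof.
move=> [[|n] [lam [e [lam_ge0 [sum_lam [e_ker f_eq]]]]]].
  by move: sum_lam; rewrite big_ord0 => /esym/eqP; rewrite oner_eq0.
have [e0_neq0 ker_e0] := e_ker ord0.
have e_line i : exists k, e i = k *: e ord0.
  by have [_ /(colker_rank1_line nuA1 e0_neq0 ker_e0)] := e_ker i.
have [k ek] := choice e_line.
pose kappa := \sum_i (lam i)%:C * `|k i| ^+ 2.
have kappa_ge0 : 0 <= kappa.
  by apply: sumr_ge0 => i _; rewrite mulr_ge0 ?ler0c ?exprn_ge0.
exists (sqrtC kappa *: e ord0); split.
  by rewrite /in_kerA -scalemxAr ker_e0 scaler0.
do 3 apply: funext => ?; rewrite f_eq normFeZ -normrX sqrtCK ger0_norm //.
by rewrite mulr_suml; apply: eq_bigr => i _; rewrite ek normFeZ mulrA.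
Qed.

End Extremality.

Theorem corollary2 (R : realType) (N1 N2 N3 : nat)
    (Phi : int * int * int -> R[i]) :
  PN N1 N2 N3 Phi ->
  nuA N1 N2 N3 Phi = 1%N ->
  forall f : trigfun R, DA N1 N2 N3 Phi f -> extremal (@QN R N1 N2 N3) f.
Proof.
move=> PN_Phi nuA1 f /(DA_normF2 nuA1) [w [ker_w ->]].
exact: extremal_normF2.
Qed.
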